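(* Let $\hat a=a_1+a_2\varepsilon$, $\hat b=b_1+b_2\varepsilon\in\mathbb{DC}$ with $a_1,b_1\notin\mathbb R$, and suppose $\hat q=q_1+q_2 j+(q_3+q_4 j)\varepsilon\in\hat{\mathbb U}$ satisfies $\hat q^*\hat a\hat q=\hat b$. Then either $$\hat a=\hat b\quad\text{and}\quad\{\hat q\in\hat{\mathbb U}:\hat a\hat q=\hat q\hat b\}=\mathbb{DC}\cap\hat{\mathbb U},$$ or $$\hat a=\overline{\hat b}\quad\text{and}\quad\{\hat q\in\hat{\mathbb U}:\hat a\hat q=\hat q\hat b\}=\{\hat q j:\hat q\in\mathbb{DC}\cap\hat{\mathbb U}\}.$$
   Context: $\mathbb{Q}$ denotes the real quaternions with units $i,j,k$; complex numbers are identified with quaternions $a+bi$ (so $jz=\bar z j$). $\varepsilon$ satisfies $\varepsilon\ne0$, $\varepsilon^2=0$ and commutes with quaternions. $\mathbb{DC}$ is the set of dual complex numbers $a+b\varepsilon$, $a,b\in\mathbb C$, and $\overline{a+b\varepsilon}=\bar a+\bar b\varepsilon$. A dual quaternion is $\tilde p_{st}+\tilde p_{\mathcal I}\varepsilon$ with quaternions $\tilde p_{st},\tilde p_{\mathcal I}$, conjugate $\hat p^*=\tilde p_{st}^*+\tilde p_{\mathcal I}^*\varepsilon$. $\hat{\mathbb U}$ is the set of unit dual quaternions, i.e. those $\hat p$ with $|\hat p|=1$, where $|\hat p|=|\tilde p_{st}|+\frac{\mathrm{sc}(\tilde p_{st}^*\tilde p_{\mathcal I})}{|\tilde p_{st}|}\varepsilon$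 for $\tilde p_{st}\ne0$, $\mathrm{sc}(\tilde p)=\frac12(\tilde p+\tilde p^* )$; equivalently $\hat p^*\hat p=\hat p\hat p^*=1$. *)

From Stdlib Require Import Reals.
Open Scope R_scope.

Record quat := Quat { qr : R; qi : R; qj : R; qk : R }.

Definition qadd (p q : quat) : quat :=
  Quat (qr p + qr q) (qi p + qi q) (qj p + qj q) (qk p + qk q).

Definition qmul (p q : quat) : quat :=
  Quat (qr p * qr q - qi p * qi q - qj p * qj q - qk p * qk q)
       (qr p * qi q + qi p * qr q + qj p * qk q - qk p * qj q)
       (qr p * qj q - qi p * qk q + qj p * qr q + qk p * qi q)
       (qr p * qk q + qi p * qj q - qj p * qi q + qk p * qr q).

Definition qconj (p : quat) : quat := Quat (qr p) (- qi p) (- qj p) (- qk p).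

Definition qzero : quat := Quat 0 0 0 0.
Definition qone : quat := Quat 1 0 0 0.
Definition qunit_j : quat := Quat 0 0 1 0.

Definition is_complex (x : quat) : Prop := qj x = 0 /\ qk x = 0.

Definition cconj (x : quat) : quat := Quat (qr x) (- qi x) (qj x) (qk x).

(* Dual quaternion  p_st + p_I eps *)
Record dquat := DQ { dst : quat; dI : quat }.

Definition dmul (p q : dquat) : dquat :=
  DQ (qmul (dst p) (dst q)) (qadd (qmul (dst p) (dI q)) (qmul (dI p) (dst q))).

Definition dconj (p : dquat) : dquat := DQ (qconj (dst p)) (qconj (dI p)).

Definition done : dquat := DQ qone qzero.
Definition dj : dquat := DQ qunit_j qzero.

Definition is_DC (p : dquat) : Prop := is_complex (dst p) /\ is_complex (dI p).

Definition dcbar (p : dquat) : dquat := DQ (cconj (dst p)) (cconj (dI p)).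

Definition is_unit_dq (p : dquat) : Prop := dmul (dconj p) p = done /\ dmul p (dconj p) = done.

From Stdlib Require Import Reals Lra Psatz.
Open Scope R_scope.

(* Write a dual quaternion as p = z + w j with z, w dual complex.  For dual
   complex a, b the equation a p = p b splits into z a = z b and w a = w b̄,
   because a commutes with z and a j = j ā.  For a unit p, z or w has nonzero
   standard part and is then cancellable among dual complex numbers; applied to
   q (q* a q = b gives a q = q b) this yields b = a or b = ā.  When Im a ≠ 0,
   multiplying by a - ā kills no nonzero dual complex number, so a solution of
   a p = p a has w = 0, i.e. p ∈ DC, and a solution of a p = p ā has z = 0,
   i.e. p = w j. *)

Ltac expand_dq :=
  unfold dmul, dconj, dcbar, done, dj, qmul, qadd, qconj, cconj, qone, qzero, qunit_j in *;
  simpl in *.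

Lemma dmul_assoc (p q r : dquat) : dmul p (dmul q r) = dmul (dmul p q) r.
Proof.
  destruct p as [[] []], q as [[] []], r as [[] []]; expand_dq.
  f_equal; f_equal; ring.
Qed.

Lemma dmul_1_l (p : dquat) : dmul done p = p.
Proof. destruct p as [[] []]; expand_dq; f_equal; f_equal; ring. Qed.

Lemma dmul_1_r (p : dquat) : dmul p done = p.
Proof. destruct p as [[] []]; expand_dq; f_equal; f_equal; ring. Qed.

Lemma dconj_dmul (p q : dquat) : dconj (dmul p q) = dmul (dconj q) (dconj p).
Proof. destruct p as [[] []], q as [[] []]; expand_dq; f_equal; f_equal; ring. Qed.

Lemma dconj_involutive (p : dquat) : dconj (dconj p) = p.
Proof. destruct p as [[] []]; expand_dq; f_equal; f_equal; ring. Qed.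

Lemma is_unit_dq_dconj (p : dquat) : is_unit_dq p -> is_unit_dq (dconj p).
Proof. intros [Hl Hr]; split; rewrite dconj_involutive; assumption. Qed.

Lemma is_unit_dq_dmul (p q : dquat) :
  is_unit_dq p -> is_unit_dq q -> is_unit_dq (dmul p q).
Proof.
  intros [Hp Hp'] [Hq Hq']; split; rewrite dconj_dmul.
  - rewrite dmul_assoc, <- (dmul_assoc _ _ p), Hp, dmul_1_r; exact Hq.
  - rewrite dmul_assoc, <- (dmul_assoc _ q), Hq', dmul_1_r; exact Hp'.
Qed.

Lemma is_unit_dq_dj : is_unit_dq dj.
Proof. split; expand_dq; f_equal; f_equal; ring. Qed.

Lemma is_unit_dq_dmul_dj (r : dquat) : is_unit_dq (dmul r dj) -> is_unit_dq r.
Proof.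
  intro Hrj.
  replace r with (dmul (dmul r dj) (dconj dj)).
  - apply is_unit_dq_dmul; [exact Hrj | apply is_unit_dq_dconj, is_unit_dq_dj].
  - rewrite <- dmul_assoc; destruct is_unit_dq_dj as [_ ->]; apply dmul_1_r.
Qed.

Lemma unit_conj_intertwine (a b q : dquat) :
  is_unit_dq q -> dmul (dmul (dconj q) a) q = b -> dmul a q = dmul q b.
Proof.
  intros [_ Hq] <-.
  rewrite !dmul_assoc, Hq, dmul_1_l; reflexivity.
Qed.

Lemma DC_dmul_comm (a z : dquat) : is_DC a -> is_DC z -> dmul a z = dmul z a.
Proof.
  destruct a as [[] []], z as [[] []]; intros [[] []] [[] []]; expand_dq; subst.
  f_equal; f_equal; ring.
Qed.

Lemma dmul_DC_dj (a : dquat) : is_DC a -> dmul a dj = dmul dj (dcbar a).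
Proof.
  destruct a as [[] []]; intros [[] []]; expand_dq; subst.
  f_equal; f_equal; ring.
Qed.

Lemma dcbar_involutive (p : dquat) : dcbar (dcbar p) = p.
Proof. destruct p as [[] []]; expand_dq; f_equal; f_equal; ring. Qed.

Lemma is_DC_dcbar (p : dquat) : is_DC p -> is_DC (dcbar p).
Proof. destruct p as [[] []]; intros [[] []]; repeat split; assumption. Qed.

(* [x = cpart x + jpart x * j], since (x2 + x3 i) j = x2 j + x3 k. *)
Definition cpart (x : quat) : quat := Quat (qr x) (qi x) 0 0.
Definition jpart (x : quat) : quat := Quat (qj x) (qk x) 0 0.
Definition dcpart (p : dquat) : dquat := DQ (cpart (dst p)) (cpart (dI p)).
Definition djpart (p : dquat) : dquat := DQ (jpart (dst p)) (jpart (dI p)).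
Definition dzero : dquat := DQ qzero qzero.

Lemma qadd_cancel_r (x y z : quat) : qadd x z = qadd y z -> x = y.
Proof.
  destruct x, y, z; unfold qadd; simpl; intro H; injection H; intros.
  f_equal; lra.
Qed.

Lemma complex_mul_cancel_l (z x y : quat) :
  is_complex z -> z <> qzero -> is_complex x -> is_complex y ->
  qmul z x = qmul z y -> x = y.
Proof.
  destruct z as [z0 z1 z2 z3], x as [x0 x1 x2 x3], y as [y0 y1 y2 y3];
  intros [] Hz [] []; unfold is_complex, qzero in *; simpl in *; subst.
  assert (Hn : z0 * z0 + z1 * z1 <> 0) by (intro; apply Hz; f_equal; nra).
  unfold qmul; simpl; intro H; injection H; intros _ _ Hi Hr.
  assert (Er : z0 * x0 - z1 * x1 = z0 * y0 - z1 * y1) by lra.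
  assert (Ei : z0 * x1 + z1 * x0 = z0 * y1 + z1 * y0) by lra.
  (* multiply by the conjugate [z0 - z1 i] *)
  f_equal; apply (Rmult_eq_reg_l (z0 * z0 + z1 * z1)); try exact Hn.
  - transitivity (z0 * (z0 * y0 - z1 * y1) + z1 * (z0 * y1 + z1 * y0));
      [rewrite <- Er, <- Ei |]; ring.
  - transitivity (z0 * (z0 * y1 + z1 * y0) - z1 * (z0 * y0 - z1 * y1));
      [rewrite <- Er, <- Ei |]; ring.
Qed.

Lemma DC_dmul_cancel_l (z x y : dquat) :
  is_DC z -> dst z <> qzero -> is_DC x -> is_DC y ->
  dmul z x = dmul z y -> x = y.
Proof.
  destruct z as [z0 zI], x as [x0 xI], y as [y0 yI];
  intros [Hz0 _] Hz [Hx0 HxI] [Hy0 HyI] E; simpl in *.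
  pose proof (f_equal dst E) as Est; pose proof (f_equal dI E) as EI; simpl in Est, EI.
  apply (complex_mul_cancel_l z0) in Est; try assumption; subst y0.
  apply qadd_cancel_r, (complex_mul_cancel_l z0) in EI; try assumption; subst yI.
  reflexivity.
Qed.

Lemma DC_dmul_dcbar_eq0 (a w : dquat) :
  is_DC a -> qi (dst a) <> 0 -> is_DC w ->
  dmul w a = dmul w (dcbar a) -> w = dzero.
Proof.
  destruct a as [[a0 a1 ? ?] [a4 a5 ? ?]], w as [[w0 w1 ? ?] [w4 w5 ? ?]];
  intros [[] []] Ha [[] []]; unfold dzero; expand_dq; subst.
  intro H; injection H; intros.
  assert (w0 = 0) by (apply (Rmult_eq_reg_l a1); [lra | exact Ha]).
  assert (w1 = 0) by (apply (Rmult_eq_reg_l a1); [lra | exact Ha]).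
  subst.
  assert (w4 = 0) by (apply (Rmult_eq_reg_l a1); [lra | exact Ha]).
  assert (w5 = 0) by (apply (Rmult_eq_reg_l a1); [lra | exact Ha]).
  subst; reflexivity.
Qed.

Lemma is_DC_dcpart (p : dquat) : is_DC (dcpart p).
Proof. repeat split. Qed.

Lemma is_DC_djpart (p : dquat) : is_DC (djpart p).
Proof. repeat split. Qed.

Lemma djpart_eq0_is_DC (p : dquat) : djpart p = dzero -> is_DC p.
Proof.
  destruct p as [[] []]; unfold djpart, jpart, dzero, qzero; simpl.
  intro H; injection H; intros; subst; repeat split.
Qed.

Lemma dcpart_eq0_dmul_dj (p : dquat) : dcpart p = dzero -> p = dmul (djpart p) dj.
Proof.
  destruct p as [[] []]; unfold dcpart, djpart, cpart, jpart, dzero; expand_dq.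
  intro H; injection H; intros; subst; f_equal; f_equal; ring.
Qed.

Lemma dmul_intertwine_DC (a b p : dquat) : is_DC a -> is_DC b ->
  dmul a p = dmul p b <->
  dmul (dcpart p) a = dmul (dcpart p) b /\ dmul (djpart p) a = dmul (djpart p) (dcbar b).
Proof.
  destruct a as [[] []], b as [[] []], p as [[] []]; intros [[] []] [[] []];
  unfold dcpart, djpart, cpart, jpart; expand_dq; subst.
  split.
  - intro H; injection H; intros; split; f_equal; f_equal; lra.
  - intros [H1 H2]; injection H1; injection H2; intros; f_equal; f_equal; lra.
Qed.

Lemma is_unit_dq_part_neq0 (p : dquat) :
  is_unit_dq p -> dst (dcpart p) <> qzero \/ dst (djpart p) <> qzero.
Proof.
  destruct p as [[p0 p1 p2 p3] ?]; intros [H _]; expand_dq.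
  injection H; intros _ _ _ _ _ _ _ Hn.
  unfold dcpart, djpart, cpart, jpart; simpl.
  destruct (Req_dec (p0 * p0 + p1 * p1) 0) as [H0 | H0].
  - right; intro E; injection E; intros; subst; nra.
  - left; intro E; injection E; intros; subst; apply H0; ring.
Qed.

Lemma DC_unit_conjugate_cases (a b q : dquat) :
  is_DC a -> is_DC b -> is_unit_dq q -> dmul (dmul (dconj q) a) q = b ->
  b = a \/ b = dcbar a.
Proof.
  intros Ha Hb Hq E.
  apply unit_conj_intertwine in E; [| exact Hq].
  apply (dmul_intertwine_DC a b q Ha Hb) in E as [Ec Ej].
  destruct (is_unit_dq_part_neq0 q Hq) as [Hc | Hj].
  - left; symmetry; exact (DC_dmul_cancel_l _ _ _ (is_DC_dcpart q) Hc Ha Hb Ec).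
  - right; rewrite (DC_dmul_cancel_l _ _ _ (is_DC_djpart q) Hj Ha (is_DC_dcbar b Hb) Ej).
    symmetry; apply dcbar_involutive.
Qed.

Lemma unit_commutant_DC (a p : dquat) : is_DC a -> qi (dst a) <> 0 ->
  (is_unit_dq p /\ dmul a p = dmul p a) <-> (is_DC p /\ is_unit_dq p).
Proof.
  intros Ha Hai; split.
  - intros [Hp E]; split; [| exact Hp].
    apply (dmul_intertwine_DC a a p Ha Ha) in E as [_ Ej].
    exact (djpart_eq0_is_DC p (DC_dmul_dcbar_eq0 a _ Ha Hai (is_DC_djpart p) Ej)).
  - intros [HpDC Hp]; split; [exact Hp | exact (DC_dmul_comm a p Ha HpDC)].
Qed.

Lemma unit_twisted_commutant_DC (a p : dquat) : is_DC a -> qi (dst a) <> 0 ->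
  (is_unit_dq p /\ dmul a p = dmul p (dcbar a)) <->
  (exists r : dquat, is_DC r /\ is_unit_dq r /\ p = dmul r dj).
Proof.
  intros Ha Hai; split.
  - intros [Hp E].
    apply (dmul_intertwine_DC a (dcbar a) p Ha (is_DC_dcbar a Ha)) in E as [Ec _].
    pose proof (dcpart_eq0_dmul_dj p (DC_dmul_dcbar_eq0 a _ Ha Hai (is_DC_dcpart p) Ec)) as Ep.
    exists (djpart p); split; [apply is_DC_djpart | split; [| exact Ep]].
    apply is_unit_dq_dmul_dj; rewrite <- Ep; exact Hp.
  - intros (r & Hr & Hru & ->); split.
    + exact (is_unit_dq_dmul r dj Hru is_unit_dq_dj).
    + rewrite dmul_assoc, (DC_dmul_comm a r Ha Hr), <- !dmul_assoc, (dmul_DC_dj a Ha).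
      reflexivity.
Qed.

Theorem corollary3p1 (a b q : dquat) :
  is_DC a -> is_DC b ->
  qi (dst a) <> 0 -> qi (dst b) <> 0 ->
  is_unit_dq q ->
  dmul (dmul (dconj q) a) q = b ->
  (a = b /\
     forall p : dquat, (is_unit_dq p /\ dmul a p = dmul p b) <-> (is_DC p /\ is_unit_dq p))
  \/
  (a = dcbar b /\
     forall p : dquat, (is_unit_dq p /\ dmul a p = dmul p b) <->
       (exists r : dquat, is_DC r /\ is_unit_dq r /\ p = dmul r dj)).
Proof.
  intros Ha Hb Hai _ Hq E.
  destruct (DC_unit_conjugate_cases a b q Ha Hb Hq E) as [-> | ->].
  - left; split; [reflexivity |].
    intro p; exact (unit_commutant_DC a p Ha Hai).
  - right; split; [symmetry; apply dcbar_involutive |].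
    intro p; exact (unit_twisted_commutant_DC a p Ha Hai).
Qed.
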